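(* Let $d$ be a positive square-free integer with $d\equiv 7\pmod 8$, $K=\mathbb{Q}[\sqrt{-d}]$ with ring of integers $\mathfrak{o}_K$, and $\mathcal{Q}=\mathbb{Q}[\sqrt{d}]$ with ring of integers $\mathfrak{o}_{\mathcal{Q}}=\mathbb{Z}[\sqrt{d}]$. (1) Let $\xi\neq\psi$ be elements of $\{1,i,j,k\}$, $p,m\in\mathbb{Z}$, and let $u=m\sqrt{-d}\,\xi+p\psi\in\mathbb{H}(\mathfrak{o}_K)$ have norm $N(u)=1$. If $1\notin\operatorname{supp}(u)$, then $u$ is a torsion unit. (2) For a unit $\epsilon=p+m\sqrt{d}$ ($p,m\in\mathbb{Z}$) of $\mathfrak{o}_{\mathcal{Q}}$ and $\psi\in\{i,j,k\}$, put $u_{(\epsilon,\psi)}=p+m\sqrt{-d}\,\psi\in\mathbb{H}(\mathfrak{o}_K)$. Then $u_{(\epsilon,\psi)}^n=u_{(\epsilon^n,\psi)}$ for all $\psi\in\{i,j,k\}$ and all $n\in\mathbb{Z}$.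
   Context: $\mathbb{H}(K)=\left(\frac{-1,-1}{K}\right)$ is the quaternion algebra over $K$ with $K$-basis $1,i,j,k$, $i^2=j^2=-1$, $k=ji=-ij$; $\mathbb{H}(\mathfrak{o}_K)$ is the set of $\mathfrak{o}_K$-linear combinations of $1,i,j,k$; the norm is $N(x_1+x_ii+x_jj+x_kk)=x_1^2+x_i^2+x_j^2+x_k^2$. The support $\operatorname{supp}(u)$ of $u$ is the set of basis elements among $1,i,j,k$ whose coefficient in $u$ is nonzero. *)

(* Quaternions over K = Q(sqrt(-d)) are modelled inside the
   quaternion algebra with coefficients in algC (algebraic complex numbers);
   K, o_K embed in algC via sqrt(-d) := sqrtC (-d), and H(K) is the
   K-subalgebra of quaternions with coefficients in K. *)
From mathcomp Require Import all_boot all_order all_algebra all_field.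
Set Implicit Arguments. Unset Strict Implicit. Unset Printing Implicit Defensive.
Import Order.TTheory GRing.Theory Num.Theory.
Local Open Scope ring_scope.

Inductive qbasis := B1 | Bi | Bj | Bk.

Record quat := Quat { q1 : algC; qi : algC; qj : algC; qk : algC }.

Definition qcoeff (u : quat) (b : qbasis) : algC :=
  match b with B1 => q1 u | Bi => qi u | Bj => qj u | Bk => qk u end.

Definition qadd (a b : quat) : quat :=
  Quat (q1 a + q1 b) (qi a + qi b) (qj a + qj b) (qk a + qk b).
Definition qscale (c : algC) (a : quat) : quat :=
  Quat (c * q1 a) (c * qi a) (c * qj a) (c * qk a).
Definition qone : quat := Quat 1 0 0 0.

Definition qbase (b : qbasis) : quat :=
  match b with
  | B1 => Quat 1 0 0 0 | Bi => Quat 0 1 0 0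
  | Bj => Quat 0 0 1 0 | Bk => Quat 0 0 0 1 end.

(* multiplication with i^2 = j^2 = -1, k = ji = -ij; hence
   i*j = -k, j*i = k, j*k = -i, k*j = i, k*i = -j, i*k = j, k*k = -1 *)
Definition qmul (a b : quat) : quat :=
  Quat (q1 a * q1 b - qi a * qi b - qj a * qj b - qk a * qk b)
       (q1 a * qi b + qi a * q1 b - qj a * qk b + qk a * qj b)
       (q1 a * qj b + qj a * q1 b - qk a * qi b + qi a * qk b)
       (q1 a * qk b + qk a * q1 b - qi a * qj b + qj a * qi b).

Definition qnorm (a : quat) : algC :=
  q1 a ^+ 2 + qi a ^+ 2 + qj a ^+ 2 + qk a ^+ 2.

Definition qconj (a : quat) : quat := Quat (q1 a) (- qi a) (- qj a) (- qk a).
Definition qinv (a : quat) : quat := qscale (qnorm a)^-1 (qconj a).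

Definition qexpn (a : quat) (n : nat) : quat := iter n (qmul a) qone.
Definition qexpz (a : quat) (n : int) : quat :=
  match n with
  | Posz k => qexpn a k
  | Negz k => qexpn (qinv a) k.+1
  end.

Definition squarefree (d : nat) : Prop :=
  forall p : nat, prime p -> ~~ (p * p %| d)%N.

Definition sqrtmd (d : nat) : algC := sqrtC (- (d%:R)).
Definition sqrtd (d : nat) : algC := sqrtC (d%:R).

Definition zsqrtd (d : nat) (p m : int) : algC := p%:~R + m%:~R * sqrtd d.

Definition is_unit_Zsqrtd (d : nat) (eps : algC) : Prop :=
  exists p m p' m' : int,
    eps = zsqrtd d p m /\ eps * zsqrtd d p' m' = 1.

Definition u_eps (d : nat) (p m : int) (psi : qbasis) : quat :=
  qadd (qscale p%:~R qone) (qscale (m%:~R * sqrtmd d) (qbase psi)).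

(* Part (1) holds for every pure quaternion u of norm 1, since then u^2 = -N(u) = -1 and u^4 = 1.
   For part (2), note that (sqrt(-d) psi)^2 = d for psi in {i, j, k}, so p + m sqrt d |-> p + m sqrt(-d) psi
   is a ring isomorphism from Z[sqrt d] onto Z[sqrt(-d) psi]; it therefore commutes with powers and
   inverses.  Reading off the coefficients of a power of epsilon requires sqrt d to be irrational, which
   follows from d = 3 (mod 4) by 2-adic descent. *)
From mathcomp Require Import all_boot all_order all_algebra all_field.
From mathcomp Require Import zify ring.
Import Order.TTheory GRing.Theory Num.Theory.
Local Open Scope ring_scope.

Lemma qmul_pure_self (u : quat) :
  qcoeff u B1 = 0 -> qmul u u = Quat (- qnorm u) 0 0 0.
Proof. by case: u => a b c e /= ->; rewrite /qmul /qnorm /=; congr Quat; ring. Qed.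

Lemma qmulr1 (u : quat) : qmul u qone = u.
Proof. by case: u => a b c e; rewrite /qmul /=; congr Quat; ring. Qed.

Lemma qmulZr (c : algC) (u v : quat) : qmul u (qscale c v) = qscale c (qmul u v).
Proof. by rewrite /qmul /qscale /=; congr Quat; ring. Qed.

Lemma qexpn_pure_norm1 (u : quat) :
  qnorm u = 1 -> qcoeff u B1 = 0 -> qexpn u 4 = qone.
Proof.
move=> u_norm u_pure.
have u2 : qmul u u = qscale (-1) qone.
  by rewrite qmul_pure_self // u_norm /qscale /qone /=; congr Quat; ring.
rewrite /qexpn /= qmulr1 u2 !qmulZr qmulr1 u2.
by rewrite /qscale /qone /=; congr Quat; ring.
Qed.

Lemma sqrn_mod4 (x : nat) : (x ^ 2 %% 4 = odd x)%N.
Proof.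
rewrite -modnXm -(odd_mod x (erefl : odd 4 = false)).
have : (x %% 4 < 4)%N by rewrite ltn_pmod.
by case: (x %% 4)%N => [|[|[|[|]]]].
Qed.

Lemma sqrn_eq_mul_sqrn_mod4 (d : nat) : (d %% 4 = 3)%N ->
  forall x y : nat, (x ^ 2 = d * y ^ 2)%N -> y = 0%N.
Proof.
move=> d_mod4 x y; elim/ltn_ind: y x => y IH x xy.
have [-> // | y_gt0] := posnP y.
have [ox oy] : ~~ odd x /\ ~~ odd y.
  move/(congr1 (modn^~ 4)): xy; rewrite -modnMm d_mod4 !sqrn_mod4.
  by case: (odd x); case: (odd y).
rewrite -(odd_double_half x) -(odd_double_half y) (negbTE ox) (negbTE oy) !add0n in xy *.
have xy2 : (x./2 ^ 2 = d * y./2 ^ 2)%N by move: xy; rewrite -!muln2; nia.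
by rewrite (IH _ _ _ xy2) //; lia.
Qed.

Section ZsqrtdQuaternions.

Variable d : nat.

Lemma zsqrtdM (a b c e : int) :
  zsqrtd d a b * zsqrtd d c e = zsqrtd d (a * c + d%:Z * b * e) (a * e + b * c).
Proof.
have d_sqrtd : (d%:Z)%:~R = sqrtd d ^+ 2 :> algC by rewrite sqrtCK.
by rewrite /zsqrtd !(rmorphD, rmorphM) /= d_sqrtd; ring.
Qed.

Lemma zsqrtd1 : zsqrtd d 1 0 = 1.
Proof. by rewrite /zsqrtd; ring. Qed.

Lemma zsqrtd_neq0 {p m p' m' : int} :
  zsqrtd d p m * zsqrtd d p' m' = 1 -> zsqrtd d p m != 0.
Proof.
by move=> eps_unit; apply: (contra_eq_neq _ eps_unit) => ->; rewrite mul0r eq_sym oner_eq0.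
Qed.

Lemma ueps_mul (a b c e : int) (psi : qbasis) : psi <> B1 ->
  qmul (u_eps d a b psi) (u_eps d c e psi) =
  u_eps d (a * c + d%:Z * b * e) (a * e + b * c) psi.
Proof.
have d_sqrtmd : (d%:Z)%:~R = - sqrtmd d ^+ 2 :> algC by rewrite sqrtCK opprK.
by case: psi => // _; rewrite /u_eps /qmul /qadd /qscale /qone /qbase /=;
  congr Quat; rewrite !(rmorphD, rmorphM) /= d_sqrtmd; ring.
Qed.

Lemma ueps1 (psi : qbasis) : u_eps d 1 0 psi = qone.
Proof. by case: psi; rewrite /u_eps /qadd /qscale /qone /qbase /=; congr Quat; ring. Qed.

Lemma qscale_ueps (c p m : int) (psi : qbasis) :
  qscale c%:~R (u_eps d p m psi) = u_eps d (c * p) (c * m) psi.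
Proof.
by case: psi; rewrite /u_eps /qadd /qscale /qone /qbase /=; congr Quat;
  rewrite ?rmorphM /=; ring.
Qed.

Lemma qconj_ueps (p m : int) (psi : qbasis) : psi <> B1 ->
  qconj (u_eps d p m psi) = u_eps d p (- m) psi.
Proof.
by case: psi => // _; rewrite /qconj /u_eps /qadd /qscale /qone /qbase /=;
  congr Quat; rewrite rmorphN /=; ring.
Qed.

Lemma qnorm_ueps (p m : int) (psi : qbasis) : psi <> B1 ->
  qnorm (u_eps d p m psi) = (p ^+ 2 - d%:Z * m ^+ 2)%:~R.
Proof.
have d_sqrtmd : (d%:Z)%:~R = - sqrtmd d ^+ 2 :> algC by rewrite sqrtCK opprK.
by case: psi => // _; rewrite /qnorm /u_eps /qadd /qscale /qone /qbase /=
  rmorphB !rmorphM /= d_sqrtmd; ring.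
Qed.

Lemma ueps_expn_zsqrtd (a b : int) (psi : qbasis) (k : nat) : psi <> B1 ->
  exists c e : int, zsqrtd d a b ^+ k = zsqrtd d c e /\
                    qexpn (u_eps d a b psi) k = u_eps d c e psi.
Proof.
move=> psi_ij; elim: k => [|k [c [e [eps_k u_k]]]].
  by exists 1, 0; rewrite expr0 zsqrtd1 ueps1.
exists (a * c + d%:Z * b * e), (a * e + b * c).
by rewrite exprS eps_k zsqrtdM /qexpn iterS -/(qexpn _ k) u_k ueps_mul.
Qed.

Hypothesis d_mod4 : (d %% 4 = 3)%N.

Lemma zsqrtd_inj {a b c e : int} :
  zsqrtd d a b = zsqrtd d c e -> a = c /\ b = e.
Proof.
rewrite /zsqrtd => eq_ab_ce.
have ac_eb : (a - c)%:~R = (e - b)%:~R * sqrtd d :> algC.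
  apply/eqP; rewrite -subr_eq0 -(subrr (c%:~R + e%:~R * sqrtd d)) -{1}eq_ab_ce.
  by rewrite !rmorphB /=; apply/eqP; ring.
have sq_eq : ((a - c) ^+ 2)%:~R = ((e - b) ^+ 2 * d%:Z)%:~R :> algC.
  transitivity (((a - c)%:~R : algC) ^+ 2); first by ring.
  by rewrite ac_eb exprMn sqrtCK; ring.
move/eqP: sq_eq; rewrite eqr_int => /eqP /(congr1 absz).
rewrite abszM !abszX /= mulnC => /(sqrn_eq_mul_sqrn_mod4 _ d_mod4) /eqP.
rewrite absz_eq0 subr_eq0 => /eqP eb; subst e.
by split => //; move: ac_eb; rewrite subrr mul0r => /eqP; rewrite intr_eq0 subr_eq0 => /eqP.
Qed.

(* The conjugate of epsilon is N(epsilon) epsilon^-1, and qinv is conjugation divided by the norm. *)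
Lemma qinv_ueps_unit {p m p' m' : int} {psi : qbasis} : psi <> B1 ->
  zsqrtd d p m * zsqrtd d p' m' = 1 -> qinv (u_eps d p m psi) = u_eps d p' m' psi.
Proof.
move=> psi_ij eps_unit.
have [N N_def] : exists N : int, N = p ^+ 2 - d%:Z * m ^+ 2 by eexists.
rewrite /qinv qnorm_ueps // qconj_ueps // -N_def.
have conj_eps : zsqrtd d p (- m) = zsqrtd d (N * p') (N * m').
  have -> : zsqrtd d (N * p') (N * m') = zsqrtd d p m * zsqrtd d p (- m) * zsqrtd d p' m'.
    by rewrite !zsqrtdM N_def; congr zsqrtd; ring.
  by rewrite mulrAC eps_unit mul1r.
have [p_eq m_eq] := zsqrtd_inj conj_eps.
have N_neq0 : N%:~R != 0 :> algC.
  rewrite intr_eq0; apply: (contra_neq _ (zsqrtd_neq0 eps_unit)) => N0.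
  by rewrite p_eq -[m]opprK m_eq N0 !mul0r oppr0 /zsqrtd mul0r addr0.
by rewrite p_eq m_eq -qscale_ueps /qscale /=; congr Quat; rewrite mulKf.
Qed.

Lemma ueps_exprz_zsqrtd {p m : int} {psi : qbasis} (n : int) :
  is_unit_Zsqrtd d (zsqrtd d p m) -> psi <> B1 ->
  exists c e : int, zsqrtd d p m ^ n = zsqrtd d c e /\
                    qexpz (u_eps d p m psi) n = u_eps d c e psi.
Proof.
move=> [p0 [m0 [p' [m' [_ eps_unit]]]]] psi_ij; case: n => k.
  by rewrite -exprnP; apply: ueps_expn_zsqrtd.
have inv_eps : (zsqrtd d p m)^-1 = zsqrtd d p' m'.
  by rewrite -[RHS](mulKf (zsqrtd_neq0 eps_unit)) eps_unit mulr1.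
have -> : zsqrtd d p m ^ Negz k = zsqrtd d p' m' ^+ k.+1 by rewrite -inv_eps exprVn.
by rewrite /qexpz (qinv_ueps_unit psi_ij eps_unit); apply: ueps_expn_zsqrtd.
Qed.

End ZsqrtdQuaternions.

Theorem mainTheorem15 (d : nat) (d_pos : (0 < d)%N) (d_sqf : squarefree d)
    (d_mod8 : (d %% 8 = 7)%N) :
  (* (1) *)
  (forall (xi psi : qbasis) (p m : int), xi <> psi ->
     let u := qadd (qscale (m%:~R * sqrtmd d) (qbase xi))
                   (qscale p%:~R (qbase psi)) in
     qnorm u = 1 -> qcoeff u B1 = 0 ->
     exists n : nat, (0 < n)%N /\ qexpn u n = qone)
  /\
  (* (2) *)
  (forall p m : int, is_unit_Zsqrtd d (zsqrtd d p m) ->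
   forall (psi : qbasis), psi <> B1 ->
   forall n : int,
     (exists pn mn : int, zsqrtd d p m ^ n = zsqrtd d pn mn) /\
     (forall pn mn : int, zsqrtd d p m ^ n = zsqrtd d pn mn ->
        qexpz (u_eps d p m psi) n = u_eps d pn mn psi)).
Proof.
have d_mod4 : (d %% 4 = 3)%N by rewrite -(modn_dvdm d (isT : 4 %| 8)%N) d_mod8.
split=> [xi psi p m _ u u_norm u_pure | p m eps_unit psi psi_ij n].
  by exists 4%N; split => //; apply: qexpn_pure_norm1.
have [c [e [eps_n u_n]]] := ueps_exprz_zsqrtd _ d_mod4 n eps_unit psi_ij.
split=> [|pn mn]; first by exists c, e.
by rewrite eps_n => /(zsqrtd_inj _ d_mod4) [<- <-].
Qed.
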